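(* For all $\delta_1,\delta_2\in\mathcal{D}^{LSL}$ and every $t\in[0,1]$, $$(\delta_1\ast\delta_2)(t)\le \min\{\delta_1(t),\delta_2(t)\}.$$
   Context: $\lambda$ denotes Lebesgue measure on $[0,1]$. Let $\mathcal{D}$ be the set of all functions $\delta:[0,1]\to[0,1]$ with $\delta(u)\le u$ for all $u$, $\delta(1)=1$, $\delta$ non-decreasing, and $|\delta(v)-\delta(u)|\le 2|v-u|$ for all $u,v$. Let $\mathcal{D}^{LSL}$ be the set of $\delta\in\mathcal{D}$ such that $x\mapsto \delta(x)/x$ is non-decreasing on $(0,1]$ and $x\mapsto \delta(x)/x^2$ is non-increasing on $(0,1]$. For $\delta_1,\delta_2\in\mathcal{D}^{LSL}$ the star product $\delta_1\ast\delta_2:[0,1]\to[0,1]$ is defined by $(\delta_1\ast\delta_2)(0):=0$ and, for $x\in(0,1]$, $$(\delta_1\ast\delta_2)(x):=\frac{1}{x}\delta_1(x)\delta_2(x)+x^2\int_{[x,1]}\left(\tfrac{\delta_1(u)}{u}\right)'\left(\tfrac{\delta_2(u)}{u}\right)'\,d\lambda(u),$$ where the derivatives exist $\lambda$-almost everywhere. *)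

From HB Require Import structures.
From mathcomp Require Import all_boot all_order all_algebra.
From mathcomp Require Import all_classical all_reals all_analysis.
Set Implicit Arguments. Unset Strict Implicit. Unset Printing Implicit Defensive.
Import Order.TTheory GRing.Theory Num.Theory.
Local Open Scope classical_set_scope.
Local Open Scope ring_scope.

Section Defs.
Variable R : realType.

(* delta : [0,1] -> [0,1], represented as R -> R; only values on [0,1] matter. *)
Definition in_D (d : R -> R) : Prop :=
  (forall u, 0 <= u <= 1 -> 0 <= d u /\ d u <= 1) /\
  (forall u, 0 <= u <= 1 -> d u <= u) /\
  d 1 = 1 /\
  (forall u v, 0 <= u -> u <= v -> v <= 1 -> d u <= d v) /\
  (forall u v, 0 <= u <= 1 -> 0 <= v <= 1 -> `|d v - d u| <= 2 * `|v - u|).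

Definition in_DLSL (d : R -> R) : Prop :=
  in_D d /\
  (forall x y, 0 < x -> x <= y -> y <= 1 -> d x / x <= d y / y) /\
  (forall x y, 0 < x -> x <= y -> y <= 1 -> d y / (y ^+ 2) <= d x / (x ^+ 2)).

(* star product; derivatives are the (a.e. existing) derivatives derive1 *)
Definition star (d1 d2 : R -> R) (x : R) : R :=
  if x == 0 then 0 else
  d1 x * d2 x / x +
  x ^+ 2 * Rintegral (@lebesgue_measure R) `[x, 1]
     (fun u => derive1 (fun v => d1 v / v) u * derive1 (fun v => d2 v / v) u).
End Defs.

(* Write f_i(u) = d_i(u) / u.  The two LSL monotonicity conditions force
   0 <= f_i'(u) <= d_i(u) / u^2 <= d_i(t) / t^2 for t <= u <= 1, so on [t, 1]
   the integrand f_1' f_2' is at most c f_2' with c = d_1(t) / t^2.  For the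
   nondecreasing continuous f_2, Fatou's lemma applied to the left difference
   quotients, whose integrals are differences of averages of f_2, gives
   int_t^1 f_2' <= f_2(1) - f_2(t) = 1 - d_2(t) / t.  Hence
   star d_1 d_2 t <= d_1 d_2 / t + t^2 c (1 - d_2 / t) = d_1(t), and the bound
   by d_2(t) follows from the symmetry of the star product. *)

From HB Require Import structures.
From mathcomp Require Import all_boot all_order all_algebra.
From mathcomp Require Import all_classical all_reals all_analysis.
From mathcomp Require Import ring lra measurable_realfun.
Import Order.TTheory GRing.Theory Num.Theory.
Import numFieldNormedType.Exports.
Local Open Scope ring_scope.
Local Open Scope classical_set_scope.

Section left_quotient.
Context {R : realType}.

Definition left_quotient (f : R -> R) (h x : R) : R := (f x - f (x - h)) / h.

Lemma left_quotient_cvg (f : R -> R) (x : R) (h : R^nat) :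
  cvg ((fun k => k^-1 *: (f (k + x) - f x)) @ 0^') ->
  (forall n, 0 < h n) -> h n @[n --> \oo] --> 0 ->
  left_quotient f (h n) x @[n --> \oo] --> derive1 f x.
Proof.
move=> df h0 h_0.
have dfl : (fun k => k^-1 *: (f (k + x) - f x)) k @[k --> 0^'-] --> derive1 f x.
  apply: cvg_trans df; apply: cvg_app; apply: within_subset => k /=.
  by rewrite lt_neqAle => /andP[].
have Nh n : - h n < 0 by rewrite oppr_lt0.
have Nh0 : - h n @[n --> \oo] --> 0 by rewrite -oppr0; apply: cvgN.
have -> : (fun n => left_quotient f (h n) x) =
    (fun n => (- h n)^-1 *: (f (- h n + x) - f x)).
  apply/funext => n.
  by rewrite /left_quotient [- h n + x]addrC invrN scaleNr -scalerN opprB mulrC.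
exact: (cvg_at_leftP _ _ _).1 dfl _ (conj Nh Nh0).
Qed.

Lemma left_quotient_ge0 (f : R -> R) (h x : R) : 0 < h ->
  {homo f : y z / y <= z} -> 0 <= left_quotient f h x.
Proof.
move=> h0 ndf; rewrite /left_quotient divr_ge0 ?subr_ge0 ?(ltW h0) //.
by apply: ndf; lra.
Qed.

Definition halving (x : R) (n : nat) : R := x / 2 * 2^-1 ^+ n.

Lemma halving_gt0 x n : 0 < x -> 0 < halving x n.
Proof. by move=> x0; rewrite /halving mulr_gt0 ?divr_gt0 ?exprn_gt0 ?invr_gt0. Qed.

Lemma halving_le x n : 0 < x -> halving x n <= x / 2.
Proof.
move=> x0; apply: ler_piMr; first by rewrite divr_ge0 ?ltW.
by rewrite exprn_ile1 ?invr_ge0 // invf_le1 // ler1n.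
Qed.

Lemma halving_cvg x : halving x n @[n --> \oo] --> 0.
Proof.
apply: (@cvg_geometric R (x / 2) 2^-1).
by rewrite ger0_norm ?invr_ge0 // invf_lt1 // ltr1n.
Qed.

End left_quotient.

Section liminf_integral.
Context {R : realType}.
Local Notation mu := (@lebesgue_measure R).

Lemma limn_einf_ge0 (v : (\bar R)^nat) :
  (forall n, (0 <= v n)%E) -> (0 <= limn_einf v)%E.
Proof.
move=> v0; rewrite limn_einf_lim; apply: lime_ge; first exact: is_cvg_einfs.
by near=> n; apply/ereal_infP => _ [m _ <-]; exact: v0.
Unshelve. all: by end_near.
Qed.

Lemma limn_einf_le_cvg (v w : (\bar R)^nat) (l : \bar R) :
  (forall n, (v n <= w n)%E) -> w n @[n --> \oo] --> l -> (limn_einf v <= l)%E.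
Proof.
move=> vw wl; rewrite limn_einf_lim -(cvg_lim _ wl) //.
apply: lee_lim; [exact: is_cvg_einfs | exact: cvgP wl |].
by near=> n; apply: le_trans (vw n); apply: ereal_inf_lbound; exists n => /=.
Unshelve. all: by end_near.
Qed.

Lemma measurable_fun_limn_einf (D : set R) (f : (R -> \bar R)^nat) :
  measurable D -> (forall n, measurable_fun D (f n)) ->
  measurable_fun D (fun x => limn_einf (f ^~ x)).
Proof.
move=> mD mf; apply: (emeasurable_fun_cvg (fun m x => einfs (f ^~ x) m)).
- by move=> m; exact: measurable_fun_einfs.
- by move=> x _; rewrite limn_einf_lim; exact: is_cvg_einfs.
Qed.

Import HBNNSimple.

(* [g] need not be measurable: the nonnegative integral is a supremum over the
   simple functions below [g]. *)
Lemma le_integral_measurable_majorant (D : set R) (g G : R -> \bar R) :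
  measurable D -> (forall x, D x -> (0 <= g x)%E) ->
  (forall x, D x -> (g x <= G x)%E) -> measurable_fun D G ->
  (\int[mu]_(x in D) g x <= \int[mu]_(x in D) G x)%E.
Proof.
move=> mD g0 gG mG; rewrite ge0_integralE //.
apply: ge_ereal_sup => _ [s /= sg <-].
rewrite -integralT_nnsfun [X in (_ <= X)%E]integral_mkcond.
apply: ge0_le_integral => //.
- by move=> x _; rewrite lee_fin; exact: fun_ge0.
- by apply: measurableT_comp => //; exact: measurable_funPT.
- exact: (measurable_restrictT G mD).1 mG.
- move=> x _; apply: le_trans (sg x) _; rewrite /patch; case: ifP => // /set_mem.
  exact: gG.
Qed.

End liminf_integral.

Section monotone_primitive.
Context {R : realType}.
Local Notation mu := (@lebesgue_measure R).
Variable F : R -> R.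
Hypothesis cF : continuous F.
Hypothesis ndF : {homo F : x y / x <= y}.

Local Notation P e := (fun y => parameterized_integral mu e y F).

Lemma parameterized_integral_is_derive (e x : R) :
  e < x -> is_derive x 1 (P e) (F x).
Proof.
move=> ex; have [||dP <-] := @continuous_FTC1_closed R F e x (x + 1) _ _ ex (cF x).
- lra.
- apply: continuous_compact_integrable; first exact: segment_compact.
  exact: continuous_subspaceT.
by rewrite derive1E; exact: derivableP.
Qed.

Lemma parameterized_integral_increment (e y z : R) : e < y -> y < z ->
  (z - y) * F y <= P e z - P e y <= (z - y) * F z.
Proof.
move=> ey yz.
have dP x : x \in `]y, z[%R -> is_derive x 1 (P e) (F x).
  by rewrite in_itv /= => /andP[yx _]; apply: parameterized_integral_is_derive; lra.
have cP : {within `[y, z], continuous (P e)}.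
  apply: derivable_within_continuous => x; rewrite in_itv /= => /andP[yx _].
  by case: (@parameterized_integral_is_derive e x ltac:(lra)).
have [x /[!in_itv] /= /andP[yx xz] ->] := MVT yz dP cP.
rewrite [F x * _]mulrC; have zy0 : 0 <= z - y by rewrite subr_ge0 ltW.
by rewrite !ler_wpM2l // ndF // ltW.
Qed.

Lemma continuous_left_quotient (h : R) : continuous (left_quotient F h).
Proof.
move=> x; apply: cvgM; last exact: cvg_cst.
apply: cvgB; first exact: cF.
apply: (@continuous_comp _ _ _ (fun y => y - h) F); last exact: cF.
by apply: cvgB; [exact: cvg_id | exact: cvg_cst].
Qed.

Lemma integral_left_quotient_le (a b h : R) : a < b -> 0 < h ->
  (\int[mu]_(x in `[a, b]) (left_quotient F h x)%:E <= (F b - F (a - h))%:E)%E.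
Proof.
move=> ab h0; pose e := a - h - 1.
pose Q := h^-1 \*: (P e - (P e \o shift (- h))).
have dQ y : a - 1 < y -> is_derive y 1 Q (left_quotient F h y).
  move=> ay; apply: is_derive_eq.
    apply: is_deriveZ; apply: is_deriveB.
      by apply: parameterized_integral_is_derive; rewrite /e; lra.
    apply: is_derive1_comp; apply: parameterized_integral_is_derive.
    by rewrite /e /=; lra.
  by rewrite /left_quotient subr0 mulr1 mulrC.
have cQ y : a - 1 < y -> {for y, continuous Q}.
  move=> ay; apply: differentiable_continuous; apply/derivable1_diffP.
  by case: (dQ y ay).
rewrite (@continuous_FTC2 _ _ Q) //; last first.
- move=> x /[!in_itv] /= /andP[ax _].
  by rewrite derive1E; case: (dQ x ltac:(lra)) => _ ->.
- split.
  + by move=> x /[!in_itv] /= /andP[ax _]; case: (dQ x ltac:(lra)).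
  + by apply: cvg_at_right_filter; apply: cQ; lra.
  + by apply: cvg_at_left_filter; apply: cQ; lra.
- exact/continuous_subspaceT/continuous_left_quotient.
have incr y : a <= y -> h * F (y - h) <= P e y - P e (y - h) <= h * F y.
  move=> ay; have := @parameterized_integral_increment e (y - h) y.
  by rewrite opprB subrKC; apply; rewrite /e; lra.
have /andP[_ incb] := incr b (ltW ab); have /andP[inca _] := incr a (lexx a).
rewrite -EFinB lee_fin.
have -> : Q b - Q a = h^-1 * ((P e b - P e (b - h)) - (P e a - P e (a - h))).
  by rewrite mulrBr.
rewrite ler_pdivrMl //; lra.
Qed.

Lemma integral_limn_einf_left_quotient_le (a b : R) (h : R^nat) : a <= b ->
  (forall n, 0 < h n) -> h n @[n --> \oo] --> 0 ->
  (\int[mu]_(x in `[a, b]) limn_einf (fun n => (left_quotient F (h n) x)%:E)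
    <= (F b - F a)%:E)%E.
Proof.
move=> + h0 h_0; rewrite le_eqVlt => /predU1P[<- | ab].
  by rewrite set_itv1 integral_set1 subrr.
have mq k : measurable_fun `[a, b] (fun x => (left_quotient F (h k) x)%:E).
  apply/measurable_EFinP; apply: measurable_funTS.
  by apply: continuous_measurable_fun; exact: continuous_left_quotient.
have q0 k y : `[a, b] y -> (0 <= (left_quotient F (h k) y)%:E)%E.
  by move=> _; rewrite lee_fin left_quotient_ge0.
apply: le_trans (@fatou _ _ _ mu _ (measurable_itv _)
  (fun k x => (left_quotient F (h k) x)%:E) mq q0) _.
apply: (@limn_einf_le_cvg _ _ (fun n => (F b - F (a - h n))%:E)).
  by move=> n; exact: integral_left_quotient_le.
apply: cvg_EFin; first by near=> n.
apply: cvgB; first exact: cvg_cst.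
apply: (continuous_cvg _ (cF a)).
by rewrite -[X in _ --> X]subr0; apply: cvgB; [exact: cvg_cst | exact: h_0].
Unshelve. all: by end_near.
Qed.

End monotone_primitive.

Section clamp.
Context {R : realType}.

Lemma lipschitz_continuous (f : R -> R) (k : R) : 0 < k ->
  (forall x y, `|f x - f y| <= k * `|x - y|) -> continuous f.
Proof.
move=> k0 fk x; apply/cvgrPdist_le => e e0.
apply/nbhs_ballP; exists (e / k); first by apply: divr_gt0.
move=> y /= xy; rewrite (le_trans (fk x y)) // -ler_pdivlMl // mulrC.
exact: ltW.
Qed.

Definition clamp (a b x : R) : R := Num.max a (Num.min x b).

Lemma clamp_increment (a b x y : R) : x <= y ->
  0 <= clamp a b y - clamp a b x <= y - x.
Proof.
move=> xy; rewrite /clamp.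
case: (leP x b) => ?; case: (leP y b) => ?;
  case: (leP a x) => ?; case: (leP a y) => ?; case: (leP a b) => ?;
  apply/andP; split; lra.
Qed.

Lemma clamp_lipschitz (a b x y : R) : `|clamp a b x - clamp a b y| <= `|x - y|.
Proof.
wlog xy : x y / x <= y.
  move=> W; have [|yx] := leP x y; first exact: W.
  by rewrite distrC (distrC x); apply: W; exact: ltW.
have /andP[c0 cxy] := @clamp_increment a b x y xy.
by rewrite distrC (distrC x) !ger0_norm // subr_ge0.
Qed.

Lemma clamp_itv (a b x : R) : a <= b -> a <= clamp a b x <= b.
Proof.
move=> ab; rewrite /clamp.
by case: (leP x b) => ?; case: (leP a x) => ?; case: (leP a b) => ?;
  apply/andP; split; lra.
Qed.

Lemma clamp_id (a b x : R) : a <= x <= b -> clamp a b x = x.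
Proof.
move=> /andP[ax xb]; rewrite /clamp.
by case: (leP x b) => ?; case: (leP a x) => ?; case: (leP a b) => ?; lra.
Qed.

End clamp.

Section dlsl.
Context {R : realType}.

Definition ratio (f : R -> R) (x : R) : R := f x / x.

Variable d : R -> R.
Hypothesis hd : in_DLSL d.

Lemma dlsl_ge0 (u : R) : 0 <= u <= 1 -> 0 <= d u.
Proof. by case: hd => [[range _] _] /range []. Qed.

Lemma dlsl_1 : d 1 = 1.
Proof. by case: hd => [[_ [_ []]]]. Qed.

Lemma dlsl_lipschitz (u v : R) : 0 <= u <= 1 -> 0 <= v <= 1 ->
  `|d u - d v| <= 2 * `|u - v|.
Proof.
by case: hd => [[_ [_ [_ [_ lip]]]] _] u01 v01; rewrite distrC (distrC u) lip.
Qed.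

Lemma dlsl_ratio_nondecr (x y : R) : 0 < x -> x <= y -> y <= 1 ->
  ratio d x <= ratio d y.
Proof. by case: hd => [_ [nd _]]; exact: nd. Qed.

Lemma dlsl_ratio2_nonincr (x y : R) : 0 < x -> x <= y -> y <= 1 ->
  d y / y ^+ 2 <= d x / x ^+ 2.
Proof. by case: hd => [_ [_ ni]]; exact: ni. Qed.

Lemma left_quotient_ratio_bounds (u k : R) : 0 < k < u -> u <= 1 ->
  0 <= left_quotient (ratio d) k u <= d u / u ^+ 2.
Proof.
move=> /andP[k0 ku] u1; set v := u - k.
have v0 : 0 < v by rewrite subr_gt0.
have vu : v <= u by rewrite gerBl ltW.
rewrite /left_quotient -/v divr_ge0 ?subr_ge0 ?dlsl_ratio_nondecr ?(ltW k0) //=.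
have ratioE x : 0 < x -> ratio d x = x * (d x / x ^+ 2).
  by move=> x0; rewrite /ratio expr2; field; rewrite gt_eqF.
rewrite ler_pdivrMr // !ratioE ?(lt_le_trans v0 vu) //.
have := dlsl_ratio2_nonincr _ _ v0 vu u1; rewrite /v.
move: (d u / u ^+ 2) (d (u - k) / (u - k) ^+ 2) => G Gv GGv; nra.
Qed.

Lemma derive1_ratio_bounds (u : R) : 0 < u <= 1 ->
  0 <= derive1 (ratio d) u <= d u / u ^+ 2.
Proof.
move=> /andP[u0 u1]; have G0 : 0 <= d u / u ^+ 2.
  by rewrite divr_ge0 ?exprn_ge0 ?(ltW u0) // dlsl_ge0 // (ltW u0).
(* Where the difference quotient diverges, [derive1] is 0 by default. *)
have [df | ndf] :=
  pselect (cvg ((fun k => k^-1 *: (ratio d (k + u) - ratio d u)) @ 0^'));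
  last by rewrite /derive1 (dvgP ndf) lexx.
suff : `[0, d u / u ^+ 2] (derive1 (ratio d) u) by rewrite /= in_itv.
have := left_quotient_cvg _ _ _ df (fun n => halving_gt0 _ n u0) (halving_cvg u).
apply: closed_cvg; first exact: itv_closed.
apply: nearW => n; rewrite /= in_itv /=.
apply: left_quotient_ratio_bounds => //.
by rewrite halving_gt0 //= (le_lt_trans (halving_le _ n u0)) // ltr_pdivrMr //; lra.
Qed.

Lemma continuous_ratio_clamp (a : R) : 0 < a <= 1 ->
  continuous (ratio d \o clamp a 1).
Proof.
move=> /andP[a0 a1].
have c01 x : 0 <= clamp a 1 x <= 1.
  by have /andP[? ?] := clamp_itv a 1 x a1; apply/andP; split => //; lra.
have cc : continuous (clamp a 1).
  by apply: (lipschitz_continuous _ 1) => // x y; rewrite mul1r clamp_lipschitz.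
have cd : continuous (d \o clamp a 1).
  apply: (lipschitz_continuous _ 2) => // x y /=.
  apply: le_trans (dlsl_lipschitz _ _ (c01 x) (c01 y)) _.
  by rewrite ler_wpM2l ?clamp_lipschitz.
move=> x; apply: cvgM; first exact: cd.
apply: cvgV; last exact: cc.
by have /andP[ax _] := clamp_itv a 1 x a1; rewrite gt_eqF // (lt_le_trans a0).
Qed.

Lemma nondecreasing_ratio_clamp (a : R) : 0 < a <= 1 ->
  {homo ratio d \o clamp a 1 : x y / x <= y}.
Proof.
move=> /andP[a0 a1] x y xy /=.
have /andP[ax _] := clamp_itv a 1 x a1; have /andP[_ y1] := clamp_itv a 1 y a1.
have /andP[cxy _] := clamp_increment a 1 x y xy.
by apply: dlsl_ratio_nondecr => //; lra.
Qed.

End dlsl.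

Section star_bound.
Context {R : realType}.
Local Notation mu := (@lebesgue_measure R).
Variables d1 d2 : R -> R.
Hypotheses (hd1 : in_DLSL d1) (hd2 : in_DLSL d2).
Variable t : R.
Hypothesis ht : 0 < t <= 1.

(* [c] bounds the derivative of [ratio d1] on [t, 1]; [F] is continuous and
   nondecreasing on the whole line and agrees with [c * ratio d2] on [t / 2, 1]. *)
Let c := d1 t / t ^+ 2.
Let F x := c * (ratio d2 \o clamp (t / 2) 1) x.

Let c_ge0 : 0 <= c.
Proof.
have /andP[t0 t1] := ht.
by rewrite divr_ge0 ?exprn_ge0 ?(ltW t0) // dlsl_ge0 // (ltW t0).
Qed.

Let half_t : 0 < t / 2 <= 1.
Proof. by have /andP[? ?] := ht; apply/andP; split; lra. Qed.

Let continuous_F : continuous F.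
Proof.
move=> x; apply: cvgM; first exact: cvg_cst.
exact: continuous_ratio_clamp hd2 _ half_t x.
Qed.

Let nondecreasing_F : {homo F : x y / x <= y}.
Proof.
move=> x y xy; rewrite /F ler_wpM2l //.
exact: nondecreasing_ratio_clamp hd2 _ half_t x y xy.
Qed.

Let derive1_ratio_mul_ge0 (x : R) : t <= x <= 1 ->
  0 <= derive1 (ratio d1) x * derive1 (ratio d2) x.
Proof.
move=> /andP[tx x1]; have /andP[t0 _] := ht.
have x01 : 0 < x <= 1 by rewrite x1 (lt_le_trans t0).
have /andP[? _] := derive1_ratio_bounds d1 hd1 _ x01.
by have /andP[? _] := derive1_ratio_bounds d2 hd2 _ x01; rewrite mulr_ge0.
Qed.

Lemma derive1_ratio_mul_le (u : R) : t <= u <= 1 ->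
  ((derive1 (ratio d1) u * derive1 (ratio d2) u)%:E
    <= limn_einf (fun n => (left_quotient F (halving t n) u)%:E))%E.
Proof.
move=> /andP[tu u1]; have /andP[t0 t1] := ht; have u0 : 0 < u := lt_le_trans t0 tu.
have u01 : 0 < u <= 1 by rewrite u0.
have /andP[l10 l1u] := derive1_ratio_bounds d1 hd1 _ u01.
have l1c : derive1 (ratio d1) u <= c.
  exact: le_trans l1u (dlsl_ratio2_nonincr d1 hd1 _ _ t0 tu u1).
have /andP[l20 _] := derive1_ratio_bounds d2 hd2 _ u01.
have hn n : 0 < halving t n <= t / 2 by rewrite halving_gt0 // halving_le.
have qE n : left_quotient F (halving t n) u
    = c * left_quotient (ratio d2) (halving t n) u.
  have /andP[h0 h2] := hn n.
  rewrite /left_quotient /F /= !clamp_id; first by rewrite -mulrBr mulrA.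
    by apply/andP; split; lra.
  by apply/andP; split; lra.
have [df | ndf] :=
  pselect (cvg ((fun k => k^-1 *: (ratio d2 (k + u) - ratio d2 u)) @ 0^')).
  have cv : left_quotient F (halving t n) u @[n --> \oo]
      --> c * derive1 (ratio d2) u.
    rewrite (funext qE); apply: cvgM; first exact: cvg_cst.
    exact: left_quotient_cvg df (fun n => (andP (hn n)).1) (halving_cvg t).
  have cvE : ((left_quotient F (halving t n) u)%:E @[n --> \oo]
      --> (c * derive1 (ratio d2) u)%:E)%E.
    by apply: cvg_EFin; first by near=> n.
  by rewrite (cvg_limn_einf_sup cvE).1 lee_fin ler_wpM2r.
rewrite {2}/derive1 (dvgP ndf) mulr0; apply: limn_einf_ge0 => n.
by rewrite lee_fin left_quotient_ge0 //; have /andP[] := hn n.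
Unshelve. all: by end_near.
Qed.

Lemma integral_derive1_ratio_mul_le :
  (\int[mu]_(x in `[t, 1%R]) (derive1 (ratio d1) x * derive1 (ratio d2) x)%:E
    <= (c * (1 - d2 t / t))%:E)%E.
Proof.
have /andP[t0 t1] := ht.
have mq n : measurable_fun `[t, 1] (fun x => (left_quotient F (halving t n) x)%:E).
  apply/measurable_EFinP; apply: measurable_funTS.
  by apply: continuous_measurable_fun; exact: continuous_left_quotient.
apply: le_trans (le_integral_measurable_majorant _ _ _ (measurable_itv _) _ _
  (measurable_fun_limn_einf _ _ (measurable_itv _) mq)) _.
- by move=> x; rewrite /= in_itv /= lee_fin; exact: derive1_ratio_mul_ge0.
- by move=> x; rewrite /= in_itv /=; exact: derive1_ratio_mul_le.
apply: le_trans (integral_limn_einf_left_quotient_le F continuous_F nondecreasing_F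
  _ _ _ t1 (fun n => halving_gt0 _ n t0) (halving_cvg t)) _.
rewrite lee_fin /F /= !clamp_id; last 2 first.
- by apply/andP; split; lra.
- by apply/andP; split; lra.
by rewrite /ratio dlsl_1 // divr1 -mulrBr.
Qed.

Lemma star_le_left : star d1 d2 t <= d1 t.
Proof.
have /andP[t0 t1] := ht.
have I0 : (0 <= \int[mu]_(x in `[t, 1%R])
    (derive1 (ratio d1) x * derive1 (ratio d2) x)%:E)%E.
  apply: integral_ge0 => x; rewrite /= in_itv /= => /andP[tx x1].
  by rewrite lee_fin derive1_ratio_mul_ge0 // tx.
have RI : Rintegral mu `[t, 1] (fun x => derive1 (ratio d1) x * derive1 (ratio d2) x)
    <= c * (1 - d2 t / t).
  have IB := integral_derive1_ratio_mul_le.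
  rewrite /Rintegral -lee_fin fineK // ge0_fin_numE //.
  exact: le_lt_trans IB (ltry _).
rewrite /star gt_eqF //.
rewrite [leRHS](_ : _ = d1 t * d2 t / t + t ^+ 2 * (c * (1 - d2 t / t))).
  by rewrite lerD2l ler_wpM2l ?exprn_ge0 ?(ltW t0).
by rewrite /c; field; rewrite gt_eqF.
Qed.

End star_bound.

Lemma star_sym {R : realType} (d1 d2 : R -> R) : star d1 d2 =1 star d2 d1.
Proof.
move=> x; have [->|x0] := eqVneq x 0; first by rewrite /star eqxx.
rewrite /star (negbTE x0) [d2 x * _]mulrC; congr (_ + _ * Rintegral _ _ _).
by apply/funext => u; rewrite mulrC.
Qed.

Lemma star0 {R : realType} (d1 d2 : R -> R) : star d1 d2 0 = 0.
Proof. by rewrite /star eqxx. Qed.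

Theorem mainTheorem2 (R : realType) (d1 d2 : R -> R) :
  in_DLSL d1 -> in_DLSL d2 ->
  forall t : R, 0 <= t <= 1 -> star d1 d2 t <= Num.min (d1 t) (d2 t).
Proof.
move=> hd1 hd2 t /andP[+ t1]; rewrite le_eqVlt => /predU1P[<- | t0].
  by rewrite star0 le_min !dlsl_ge0 // lexx ler01.
have ht : 0 < t <= 1 by rewrite t0 t1.
by rewrite le_min star_le_left // star_sym star_le_left.
Qed.
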